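(* Let $k\ge 2$. For every finite simple graph $G$ admitting a closed neighborhood balanced $k$-coloring and every integer $N\ge 0$, there exist a finite simple graph $G'$ containing $G$ as an induced subgraph, a closed neighborhood balanced $k$-coloring $c'$ of $G'$, and a color $a\in\{1,\dots,k\}$ such that $|c'^{-1}(b)|-|c'^{-1}(a)|\ge N$ for every color $b\neq a$. In particular, there exist graphs with closed neighborhood balanced $k$-colorings having arbitrarily fewer vertices of one color than of each of the other $k-1$ colors.
   Context: For a vertex $v$, $N[v]=\{v\}\cup\{u : uv\in E(G)\}$. A closed neighborhood balanced $k$-coloring of $G$ is a map $c: V(G)\to\{1,\dots,k\}$ such that for every vertex $v$ the numbers $|\{u\in N[v] : c(u)=i\}|$, $i=1,\dots,k$, are all equal. *)

From mathcomp Require Import all_boot.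
Set Implicit Arguments. Unset Strict Implicit. Unset Printing Implicit Defensive.

Definition simple_graph (T : finType) (e : rel T) : Prop :=
  symmetric e /\ irreflexive e.

Definition closed_nbhd (T : finType) (e : rel T) (v : T) : {set T} :=
  [set u | (u == v) || e v u].

(* Colours 1..k are represented by 'I_k = {0,...,k-1}. *)
Definition cnb_coloring (T : finType) (e : rel T) (k : nat) (c : T -> 'I_k) : Prop :=
  forall (v : T) (i j : 'I_k),
    #|[set u in closed_nbhd e v | c u == i]| = #|[set u in closed_nbhd e v | c u == j]|.

Definition induced_embedding (T T' : finType) (e : rel T) (e' : rel T') (f : T -> T') : Prop :=
  injective f /\ forall x y : T, e' (f x) (f y) = e x y.

From mathcomp Require Import all_boot zify.
Set Implicit Arguments. Unset Strict Implicit. Unset Printing Implicit Defensive.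

(* Add to G disjoint copies of a gadget: two adjacent hubs of color 0, each
   attached to two disjoint cliques on the remaining k - 1 colors.  A hub sees
   every color twice in its closed neighbourhood and a clique vertex sees every
   color once, so the gadget is balanced, yet it has 2 vertices of color 0
   against 4 of every other color.  With |G| + N copies the surplus of each
   other color over color 0 is at least 2(|G| + N) - |G| >= N. *)

Lemma card_color_class_imset (T T' : finType) (f : T -> T') (k : nat)
    (c : T' -> 'I_k) (A : {set T}) (i : 'I_k) :
  injective f ->
  #|[set u in f @: A | c u == i]| = #|[set u in A | c (f u) == i]|.
Proof.
move=> f_inj; rewrite -(card_imset _ f_inj); apply: eq_card => u.
rewrite inE; apply/andP/imsetP => [[/imsetP[x Ax ->] cx]|[x]].
  by exists x; rewrite // inE Ax.
by rewrite inE => /andP[Ax cx] ->; rewrite mem_imset.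
Qed.

Lemma cnb_coloring_const (T : finType) (e : rel T) (k : nat) (c : T -> 'I_k) :
  (forall v, exists d, forall i, #|[set u in closed_nbhd e v | c u == i]| = d) ->
  cnb_coloring e c.
Proof. by move=> bal v i j; have [d hd] := bal v; rewrite !hd. Qed.

Section DisjointUnion.
Variables (T1 T2 : finType) (e1 : rel T1) (e2 : rel T2).

Definition sum_rel : rel (T1 + T2) := fun x y =>
  match x, y with
  | inl a, inl b => e1 a b
  | inr a, inr b => e2 a b
  | _, _ => false
  end.

Definition sum_coloring k (c1 : T1 -> 'I_k) (c2 : T2 -> 'I_k) (x : T1 + T2) :=
  match x with inl a => c1 a | inr b => c2 b end.

Lemma simple_graph_sum : simple_graph e1 -> simple_graph e2 -> simple_graph sum_rel.
Proof.
move=> [sym1 irr1] [sym2 irr2]; split.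
  by move=> [x|x] [y|y] /=.
by move=> [x|x] /=.
Qed.

Lemma induced_embedding_inl : induced_embedding e1 sum_rel inl.
Proof. by split=> // x y []. Qed.

Lemma closed_nbhd_inl v : closed_nbhd sum_rel (inl v) = inl @: closed_nbhd e1 v.
Proof.
apply/setP => -[x|x]; rewrite !inE.
  by rewrite (mem_imset _ _ (@inl_inj T1 T2)) inE.
by apply/esym/imsetP => -[].
Qed.

Lemma closed_nbhd_inr v : closed_nbhd sum_rel (inr v) = inr @: closed_nbhd e2 v.
Proof.
apply/setP => -[x|x]; rewrite !inE.
  by apply/esym/imsetP => -[].
by rewrite (mem_imset _ _ (@inr_inj T1 T2)) inE.
Qed.

Lemma cnb_coloring_sum k (c1 : T1 -> 'I_k) (c2 : T2 -> 'I_k) :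
  cnb_coloring e1 c1 -> cnb_coloring e2 c2 -> cnb_coloring sum_rel (sum_coloring c1 c2).
Proof.
move=> bal1 bal2 [v|v] i j.
  by rewrite closed_nbhd_inl !card_color_class_imset; [apply: bal1 | apply: inl_inj ..].
by rewrite closed_nbhd_inr !card_color_class_imset; [apply: bal2 | apply: inr_inj ..].
Qed.

Lemma card_color_class_sum k (c1 : T1 -> 'I_k) (c2 : T2 -> 'I_k) i :
  #|[set x | sum_coloring c1 c2 x == i]| =
  #|[set x | c1 x == i]| + #|[set x | c2 x == i]|.
Proof.
by rewrite -!sum1_card big_sumType; congr (_ + _); apply: eq_bigl => x; rewrite !inE.
Qed.

End DisjointUnion.

Section Copies.
Variables (M : nat) (T : finType) (e : rel T).

Definition copies_rel : rel ('I_M * T) := fun x y => (x.1 == y.1) && e x.2 y.2.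

Definition copies_coloring k (c : T -> 'I_k) (x : 'I_M * T) := c x.2.

Lemma simple_graph_copies : simple_graph e -> simple_graph copies_rel.
Proof.
move=> [sym irr]; split; last by move=> x; rewrite /copies_rel irr andbF.
by move=> x y; rewrite /copies_rel eq_sym sym.
Qed.

Lemma closed_nbhd_copies m v : closed_nbhd copies_rel (m, v) = pair m @: closed_nbhd e v.
Proof.
apply/setP => -[m' x]; rewrite !inE; apply/idP/imsetP => [|[y]].
  rewrite /copies_rel /= => /orP[/eqP[-> ->]|/andP[/eqP-> vx]].
    by exists v; rewrite ?inE ?eqxx.
  by exists x; rewrite ?inE ?vx ?orbT.
by rewrite inE => y_nbhd [-> ->]; rewrite /copies_rel /= xpair_eqE !eqxx.
Qed.

Lemma cnb_coloring_copies k (c : T -> 'I_k) :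
  cnb_coloring e c -> cnb_coloring copies_rel (copies_coloring c).
Proof.
move=> bal [m v] i j; rewrite closed_nbhd_copies !card_color_class_imset ?bal //.
all: by move=> x y [].
Qed.

Lemma card_color_class_copies k (c : T -> 'I_k) i :
  #|[set x | copies_coloring c x == i]| = M * #|[set x | c x == i]|.
Proof.
have -> : [set x | copies_coloring c x == i] = setX [set: 'I_M] [set x | c x == i].
  by apply/setP => -[m x]; rewrite !inE.
by rewrite cardsX cardsT card_ord.
Qed.

End Copies.

Arguments copies_rel M {T} e.

Section Gadget.
Variable K : nat.

(* [(s, None)] is hub [s]; [(s, Some (t, j))] is the vertex of color [lift ord0 j]
   in the [t]-th clique attached to hub [s]. *)
Definition gadget := (bool * option (bool * 'I_K))%type.

Definition gadget_rel : rel gadget := fun x y =>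
  match x.2, y.2 with
  | None, None => x.1 != y.1
  | Some (t, j), Some (t', j') => [&& x.1 == y.1, t == t' & j != j']
  | _, _ => x.1 == y.1
  end.

Definition gadget_coloring (x : gadget) : 'I_K.+1 :=
  if x.2 is Some (_, j) then lift ord0 j else ord0.

Lemma simple_graph_gadget : simple_graph gadget_rel.
Proof.
split; last by move=> [s [[t j]|]]; rewrite /gadget_rel /= !eqxx.
move=> [s [[t j]|]] [s' [[t' j']|]]; rewrite /gadget_rel /=;
  by rewrite ?(eq_sym s) ?(eq_sym t) ?(eq_sym j).
Qed.

Lemma gadget_clique_eqE s t j s' t' j' :
  ((s, Some (t, j)) == (s', Some (t', j')) :> gadget) = [&& s == s', t == t' & j == j'].
Proof. by []. Qed.

Lemma gadget_hub_eqE s s' : ((s, None) == (s', None) :> gadget) = (s == s').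
Proof. by rewrite xpair_eqE andbT. Qed.

Lemma gadget_clique_neq_hub s t j s' : ((s, Some (t, j)) == (s', None) :> gadget) = false.
Proof. by rewrite xpair_eqE andbF. Qed.

Lemma gadget_hub_neq_clique s s' t' j' : ((s, None) == (s', Some (t', j')) :> gadget) = false.
Proof. by rewrite xpair_eqE andbF. Qed.

Lemma lift0_neq0 j : (lift ord0 j == ord0 :> 'I_K.+1) = false.
Proof. by rewrite eq_sym (negbTE (neq_lift _ _)). Qed.

Lemma ord0_neq_lift0 j : (ord0 == lift ord0 j :> 'I_K.+1) = false.
Proof. by rewrite (negbTE (neq_lift _ _)). Qed.

Ltac gadget_simpl :=
  rewrite !inE /gadget_rel /gadget_coloring /=;
  rewrite ?(gadget_clique_eqE, gadget_hub_eqE, gadget_clique_neq_hub, gadget_hub_neq_clique,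
            inj_eq (@lift_inj _ ord0), lift0_neq0, ord0_neq_lift0, andbT, andbF, orbF) /=.

Lemma card_gadget_hub_class s (j : 'I_K) :
  #|[set u in closed_nbhd gadget_rel (s, None) | gadget_coloring u == lift ord0 j]| = 2.
Proof.
have -> : [set u in closed_nbhd gadget_rel (s, None) | gadget_coloring u == lift ord0 j]
        = [set (s, Some (true, j)); (s, Some (false, j))].
  apply/setP => -[s' [[t' j']|]]; gadget_simpl => //.
  by rewrite [s == _]eq_sym; case: t'; rewrite ?andbF ?orbF.
by rewrite cards2 xpair_eqE eqxx.
Qed.

Lemma card_gadget_hub_class0 s :
  #|[set u in closed_nbhd gadget_rel (s, None) | gadget_coloring u == ord0]| = 2.
Proof.
have -> : [set u in closed_nbhd gadget_rel (s, None) | gadget_coloring u == ord0]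
        = [set (true, None); (false, None)].
  apply/setP => -[s' [[t' j']|]]; gadget_simpl => //.
  by case: s; case: s'.
by rewrite cards2 gadget_hub_eqE.
Qed.

Lemma card_gadget_clique_class s t j (j' : 'I_K) :
  #|[set u in closed_nbhd gadget_rel (s, Some (t, j)) | gadget_coloring u == lift ord0 j']| = 1.
Proof.
rewrite -(cards1 (s, Some (t, j'))); apply: eq_card => -[s' [[t' j'']|]]; gadget_simpl => //.
case: (eqVneq j'' j') => [->|_]; rewrite ?eqxx ?andbF ?andbT //.
by case: (eqVneq j' j); case: s s' t t' => [] [] [] [].
Qed.

Lemma card_gadget_clique_class0 s t j :
  #|[set u in closed_nbhd gadget_rel (s, Some (t, j)) | gadget_coloring u == ord0]| = 1.
Proof.
rewrite -(cards1 ((s, None) : gadget)); apply: eq_card => -[s' [[t' j']|]]; by gadget_simpl.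
Qed.

Lemma cnb_coloring_gadget : cnb_coloring gadget_rel gadget_coloring.
Proof.
apply: cnb_coloring_const => -[s [[t j]|]].
  by exists 1 => i; case: (unliftP ord0 i) => [j' ->|->];
    [apply: card_gadget_clique_class | apply: card_gadget_clique_class0].
by exists 2 => i; case: (unliftP ord0 i) => [j ->|->];
  [apply: card_gadget_hub_class | apply: card_gadget_hub_class0].
Qed.

Lemma card_gadget_class0 : #|[set x | gadget_coloring x == ord0]| = 2.
Proof.
have -> : [set x | gadget_coloring x == ord0] = [set (true, None); (false, None)].
  by apply/setP => -[[] [[t j]|]]; gadget_simpl.
by rewrite cards2 gadget_hub_eqE.
Qed.

Lemma card_gadget_class (j : 'I_K) : #|[set x | gadget_coloring x == lift ord0 j]| = 4.
Proof.
pose clique_vertex (p : bool * bool) : gadget := (p.1, Some (p.2, j)).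
have clique_vertex_inj : injective clique_vertex by move=> [s t] [s' t'] [-> ->].
have -> : [set x | gadget_coloring x == lift ord0 j] = clique_vertex @: setT.
  apply/setP => -[s [[t j']|]]; gadget_simpl; last by apply/esym/imsetP => -[[? ?] _ []].
  case: (eqVneq j' j) => [->|neq_j]; first by apply/esym/imsetP; exists (s, t).
  by apply/esym/imsetP => -[[? ?] _ [_ _ eq_j]]; rewrite eq_j eqxx in neq_j.
by rewrite card_imset // cardsT card_prod card_bool.
Qed.

End Gadget.

Arguments gadget_rel : clear implicits.
Arguments gadget_coloring {K}.
Arguments cnb_coloring_gadget : clear implicits.

Theorem corollary2p14 (k : nat) (hk : 2 <= k)
  (T : finType) (e : rel T) (hG : simple_graph e)
  (hcol : exists c : T -> 'I_k, cnb_coloring e c) (N : nat) :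
  exists (T' : finType) (e' : rel T') (f : T -> T') (c' : T' -> 'I_k) (a : 'I_k),
    [/\ simple_graph e', induced_embedding e e' f, cnb_coloring e' c' &
        forall b : 'I_k, b != a ->
          #|[set x | c' x == a]| + N <= #|[set x | c' x == b]| ].
Proof.
case: k hk hcol => [|[|K]] // _ [c col_c].
pose M := #|T| + N.
exists _, (sum_rel e (copies_rel M (gadget_rel K.+1))), inl,
  (sum_coloring c (copies_coloring gadget_coloring)), ord0; split.
- exact: simple_graph_sum hG (simple_graph_copies _ (simple_graph_gadget K.+1)).
- exact: induced_embedding_inl.
- exact: cnb_coloring_sum col_c (cnb_coloring_copies (cnb_coloring_gadget K.+1)).
move=> b; case: (unliftP ord0 b) => [j ->|-> //] _.
rewrite !card_color_class_sum !card_color_class_copies.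
rewrite card_gadget_class0 card_gadget_class.
have := max_card [set x | c x == ord0]; rewrite /M; lia.
Qed.
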